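(* For every integer $k\ge1$, $$\sum_{j=0}^{\lfloor\frac{k-1}{2}\rfloor}(k-2j)\binom{k}{j}^2=k\binom{k-1}{\lfloor\frac{k-1}{2}\rfloor}^2.$$ *)

From mathcomp Require Import all_boot.

(** Multiplying by [k], the identities [k 'C(k-1, m) = (m+1) 'C(k, m+1)] and
    [k 'C(k-1, m+1) = (k-m-1) 'C(k, m+1)] show that [k^2 'C(k-1, m)^2]
    increases from [m] to [m+1] by exactly [k (k - 2(m+1)) 'C(k, m+1)^2], so the
    partial sums telescope. *)
From mathcomp Require Import all_boot.
From mathcomp Require Import zify.

Lemma sqr_mul_bin_pred_succ (k m : nat) : 2 * m.+1 <= k ->
  (k * 'C(k.-1, m.+1)) ^ 2
  = (k * 'C(k.-1, m)) ^ 2 + k * (k - 2 * m.+1) * 'C(k, m.+1) ^ 2.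
Proof.
move=> hm; rewrite (mul_bin_down k m.+1) (mul_bin_diag k m) !expnMn.
have -> : (k - m.+1) ^ 2 = m.+1 ^ 2 + k * (k - 2 * m.+1) by nia.
by rewrite mulnDl.
Qed.

Lemma sum_weighted_sqr_bin (k m : nat) : 2 * m <= k ->
  \sum_(0 <= j < m.+1) (k - 2 * j) * 'C(k, j) ^ 2 = k * 'C(k.-1, m) ^ 2.
Proof.
elim: m => [|m IH] hm; first by rewrite big_nat1 !bin0 muln0 subn0.
rewrite big_nat_recr //= IH; last by lia.
have k_gt0 : 0 < k by lia.
have := sqr_mul_bin_pred_succ k m hm; rewrite !expnMn => step.
by apply/eqP; rewrite -(eqn_pmul2l k_gt0); apply/eqP; nia.
Qed.

Theorem lemma3p5 (k : nat) (hk : 1 <= k) :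
  \sum_(0 <= j < ((k - 1) %/ 2).+1) (k - 2 * j) * 'C(k, j) ^ 2
  = k * 'C(k - 1, (k - 1) %/ 2) ^ 2.
Proof.
rewrite sum_weighted_sqr_bin ?subn1 //.
by apply: leq_trans (leq_pred k); rewrite -subn1 mulnC leq_divM.
Qed.
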